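(* For every $k\ge 1$, the bi-hypergraph obtained from $\mathcal H_{2k+1}$ by removing the edge $\{v_{2k+1,1},v_{2k+1,2},v_{2k+1,3}\}$ and adding the edges $\{v_{1,j},v_{2k+1,j},v_{2k+1,j+1}\}$ for all $j\in[3]$ is minimal uncolorable.
   Context: A bi-hypergraph $\mathcal H=(V,E)$ consists of a finite vertex set $V$ and a set $E$ of subsets of $V$, called edges, with no edge contained in another. A mapping $f:V\to\mathbb N$ is a proper coloring of $\mathcal H$ if $1<|f(e)|<|e|$ for every $e\in E$, where $f(e)=\{f(v):v\in e\}$. $\mathcal H$ is colorable if it has a proper coloring, and uncolorable otherwise. A subhypergraph of $\mathcal H$ is a bi-hypergraph $(V',E')$ with $V'\subseteq V$, $E'\subseteq E$; $\mathcal H$ is minimal uncolorable if it is uncolorable but every proper subhypergraph of it is colorable. For $k\ge 2$, $\mathcal H_k$ is the $3$-uniform bi-hypergraph with vertex set $\{v_{i,j}: i\in[k], j\in[3]\}$ (all distinct), with the convention $v_{i,4}=v_{i,1}$, $v_{i,5}=v_{i,2}$, whose edges are the sets $\{v_{i,1},v_{i,2},v_{i,3}\}$ for all $i\in[k]$ and the sets $\{v_{q+1,j},v_{q,j},v_{q,j+t}\}$ for all $q\in[k-1]$, $j\in[3]$, $t\in\{1,2\}$. *)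

From mathcomp Require Import all_boot.
Set Implicit Arguments. Unset Strict Implicit. Unset Printing Implicit Defensive.

Definition is_bihypergraph (T : finType) (V : {set T}) (E : {set {set T}}) : Prop :=
  (forall e, e \in E -> e \subset V) /\
  (forall e e', e \in E -> e' \in E -> e \subset e' -> e = e').

Definition proper_coloring (T : finType) (E : {set {set T}}) (f : T -> nat) : Prop :=
  forall e, e \in E -> 1 < size (undup [seq f x | x <- enum e]) < #|e|.

Definition colorable (T : finType) (E : {set {set T}}) : Prop :=
  exists f : T -> nat, proper_coloring E f.

Definition subhypergraph (T : finType) (V' : {set T}) (E' : {set {set T}})
  (V : {set T}) (E : {set {set T}}) : Prop :=
  is_bihypergraph V' E' /\ V' \subset V /\ E' \subset E.

Definition minimal_uncolorable (T : finType) (V : {set T}) (E : {set {set T}}) : Prop :=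
  is_bihypergraph V E /\ ~ colorable E /\
  (forall V' E', subhypergraph V' E' V E -> (V', E') <> (V, E) -> colorable E').

(* Vertices v_{i,j}, i in [n], j in [3], encoded 0-based as (i-1, j-1). *)
Definition vtx (n : nat) := ('I_n * 'I_3)%type.

Definition jadd (j : 'I_3) (t : nat) : 'I_3 := inord ((j + t) %% 3).

Definition triangle (n : nat) (i : 'I_n) : {set vtx n} := [set (i, j) | j : 'I_3].

(* the edge {v_{q+1,j}, v_{q,j}, v_{q,j+t}} where q' = q+1 *)
Definition link_edge (n : nat) (q' q : 'I_n) (j : 'I_3) (t : nat) : {set vtx n} :=
  [set (q', j); (q, j); (q, jadd j t)].

Definition H_edges (n : nat) : {set {set vtx n}} :=
  [set e | [exists i : 'I_n, e == triangle i] ||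
           [exists q' : 'I_n, exists q : 'I_n, exists j : 'I_3, exists t : 'I_3,
              [&& val q' == (val q).+1, (t == 1 :> nat) || (t == 2 :> nat) &
                  e == link_edge q' q j t]]].

Definition modified_edges (k : nat) : {set {set vtx (2 * k).+1}} :=
  (H_edges (2 * k).+1 :\ triangle ord_max) :|:
  [set [set ((ord0 : 'I_(2 * k).+1), j); (ord_max, j); (ord_max, jadd j 1)] | j : 'I_3].

From mathcomp Require Import all_boot zify.
Set Implicit Arguments. Unset Strict Implicit. Unset Printing Implicit Defensive.

(* All edges have three vertices, so a coloring is proper iff every edge sees
   exactly two colors.  Rows are indexed 0..2k; rows 0..2k-1 carry a triangle.
   A two-colored triangle has color d at one position p and c at the other two,
   and the six link edges towards the next row force that row to have color c
   at both positions other than p; if it carries a triangle it is the swapped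
   pattern (c at p, d elsewhere).  So the rows alternate, and since 2k is even
   the closing edge at position p + 1 sees a single color.  Conversely, for each
   edge there is an explicit coloring built from alternating patterns that
   violates that edge only. *)

Definition two_valued (a b c : nat) : bool := size (undup [:: a; b; c]) == 2.

Lemma two_valuedE a b c :
  two_valued a b c = ((a == b) || (b == c) || (a == c)) && ~~ ((a == b) && (b == c)).
Proof.
rewrite /two_valued /= !inE.
by case ab: (a == b); case bc: (b == c); case ac: (a == c) => //=; lia.
Qed.

Lemma two_valued_cc a c : two_valued a c c = (a != c).
Proof. rewrite two_valuedE; apply/idP/idP; lia. Qed.

Lemma two_valued_cd a c d : c != d -> two_valued a c d = (a == c) || (a == d).
Proof. rewrite two_valuedE => Hcd; apply/idP/idP; lia. Qed.

Definition pattern (p c d j : nat) : nat := if j == p then d else c.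

Definition two_valued_row (x : nat -> nat) : bool := two_valued (x 0) (x 1) (x 2).

Lemma two_valued_pattern p c d : p < 3 -> c != d -> two_valued_row (pattern p c d).
Proof.
rewrite /two_valued_row two_valuedE /pattern => Hp Hcd.
by case: p Hp => [|[|[|?]]] // _ /=; lia.
Qed.

Lemma two_valued_rowP x : two_valued_row x ->
  exists p c d, [/\ p < 3, c != d & forall j, j < 3 -> x j = pattern p c d j].
Proof.
rewrite /two_valued_row two_valuedE /pattern => Hx.
case: (eqVneq (x 0) (x 1)) => E01.
  by exists 2, (x 0), (x 2); split => [||[|[|[|?]]]] //=; lia.
case: (eqVneq (x 1) (x 2)) => E12.
  by exists 0, (x 1), (x 0); split => [||[|[|[|?]]]] //=; lia.
by exists 1, (x 0), (x 1); split => [||[|[|[|?]]]] //=; lia.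
Qed.

Definition link_ok (x y : nat -> nat) (j t : nat) : bool :=
  two_valued (y j) (x j) (x ((j + t) %% 3)).

Definition links_ok (x y : nat -> nat) : Prop :=
  forall j t, j < 3 -> (t == 1) || (t == 2) -> link_ok x y j t.

Lemma links_from_patternP p c d y : p < 3 -> c != d ->
  links_ok (pattern p c d) y <->
  (forall j, j < 3 -> j != p -> y j = d) /\ ((y p == c) || (y p == d)).
Proof.
move=> Hp Hcd; have Hdc : d != c by rewrite eq_sym.
have shift_off t : (t == 1) || (t == 2) -> ((p + t) %% 3 == p) = false by lia.
rewrite /links_ok /link_ok /pattern; split => [H | [Hy Hyp] j t Hj Ht]; last first.
  have [-> | Hjp] := eqVneq j p.
    by rewrite shift_off // two_valued_cd // orbC.
  rewrite (Hy j Hj Hjp) two_valuedE.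
  by case: ifP => _; lia.
split => [j Hj Hjp|]; last first.
  by have := H p 1 Hp erefl; rewrite ?eqxx shift_off // two_valued_cd // orbC.
have : ((j + 1) %% 3 == p) && ((j + 2) %% 3 != p) \/
       ((j + 1) %% 3 != p) && ((j + 2) %% 3 == p) by lia.
case=> /andP [N1 N2]; move: (H j 1 Hj erefl) (H j 2 Hj erefl).
all: rewrite (negbTE Hjp) ?(eqP N1) ?(eqP N2) eqxx ?(negbTE N1) ?(negbTE N2).
all: rewrite two_valued_cc two_valued_cd //; lia.
Qed.

Lemma eq_links_ok x x' y : (forall j, j < 3 -> x j = x' j) ->
  links_ok x y -> links_ok x' y.
Proof.
move=> Ex H j t Hj Ht; have := H j t Hj Ht.
by rewrite /link_ok !Ex // ltn_mod.
Qed.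

Lemma links_pattern_step p c d y : p < 3 -> c != d ->
  links_ok (pattern p c d) y -> two_valued_row y ->
  forall j, j < 3 -> y j = pattern p d c j.
Proof.
move=> Hp Hcd /(links_from_patternP _ Hp Hcd) [Hy Hyp] Hrow j Hj.
rewrite /pattern; case: eqP => [-> | /eqP Hjp]; last exact: Hy.
move: Hrow (Hy 0) (Hy 1) (Hy 2); rewrite /two_valued_row two_valuedE.
by case: p Hp Hyp {Hy Hj} => [|[|[|?]]] //= _; lia.
Qed.

Definition closing_ok (z y : nat -> nat) (j : nat) : bool :=
  two_valued (z j) (y j) (y ((j + 1) %% 3)).

Lemma grid_uncolorable K (g : nat -> nat -> nat) : 0 < K -> ~~ odd K ->
  (forall i, i < K -> two_valued_row (g i)) ->
  (forall q, q < K -> links_ok (g q) (g q.+1)) ->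
  ~ (forall j, j < 3 -> closing_ok (g 0) (g K) j).
Proof.
move=> K0 evenK Hrow Hlink Hclose.
have [p [c [d [Hp Hcd Hg0]]]] := two_valued_rowP (Hrow 0 K0).
have Hdc : d != c by rewrite eq_sym.
have Hg i : i < K -> forall j, j < 3 ->
    g i j = (if odd i then pattern p d c else pattern p c d) j.
  elim: i => [|i IH] Hi; first exact: Hg0.
  have Hi' : i < K by lia.
  move: (IH Hi') (Hlink i Hi') => /=; case: (odd i) => /= Egi /(eq_links_ok Egi).
    by move/links_pattern_step => /(_ Hp Hdc (Hrow _ Hi)).
  by move/links_pattern_step => /(_ Hp Hcd (Hrow _ Hi)).
have oddK1 : odd K.-1 by lia.
have /(links_from_patternP _ Hp Hdc) [HgK _] : links_ok (pattern p d c) (g K).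
  by rewrite -(prednK K0); apply: eq_links_ok (Hlink _ _) => [j Hj|]; rewrite ?Hg ?oddK1 //; lia.
have := Hclose ((p + 1) %% 3) (ltn_mod _ _).
rewrite /closing_ok Hg0 ?ltn_mod // !HgK ?ltn_mod //; try lia.
have -> : pattern p c d ((p + 1) %% 3) = c by rewrite /pattern ifN //; lia.
by rewrite two_valued_cc eqxx.
Qed.

Lemma links_pattern_swap p c d : p < 3 -> c != d ->
  links_ok (pattern p c d) (pattern p d c).
Proof.
move=> Hp Hcd; apply/links_from_patternP => //.
by split=> [j _ Hjp|]; rewrite /pattern ?(negbTE Hjp) ?eqxx ?orbT.
Qed.

Lemma links_pattern_const p c d : p < 3 -> c != d ->
  links_ok (pattern p c d) (fun _ => d).
Proof. by move=> Hp Hcd; apply/links_from_patternP => //; rewrite eqxx orbT. Qed.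

Lemma links_const c y : (forall j, j < 3 -> y j != c) -> links_ok (fun _ => c) y.
Proof. by move=> Hy j t Hj _; rewrite /link_ok two_valued_cc Hy. Qed.

Definition alternating (p a b i : nat) : nat -> nat :=
  if odd i then pattern p b a else pattern p a b.

Lemma two_valued_alternating p a b i : p < 3 -> a != b ->
  two_valued_row (alternating p a b i).
Proof.
by move=> Hp Hab; rewrite /alternating; case: ifP => _; apply: two_valued_pattern;
  rewrite // eq_sym.
Qed.

Lemma links_alternating p a b i : p < 3 -> a != b ->
  links_ok (alternating p a b i) (alternating p a b i.+1).
Proof.
move=> Hp Hab; rewrite /alternating /=.
by case: (odd i); apply: links_pattern_swap; rewrite // eq_sym.
Qed.

(* Rows alternate between [pattern p 0 1] and [pattern p 1 0]; since the top
   row [K] is even it repeats row [0], and the closing edge at [j] is then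
   monochromatic exactly when neither [j] nor [j + 1] is [p]. *)
Definition coloring_without_closing (j0 i : nat) : nat -> nat :=
  alternating ((j0 + 2) %% 3) 0 1 i.

Lemma coloring_without_closing_ok K j0 (g := coloring_without_closing j0) :
  ~~ odd K -> j0 < 3 ->
  [/\ forall i, two_valued_row (g i),
      forall q, links_ok (g q) (g q.+1) &
      forall j, j < 3 -> j != j0 -> closing_ok (g 0) (g K) j].
Proof.
move=> evenK Hj0; subst g; have Hp : (j0 + 2) %% 3 < 3 by rewrite ltn_mod.
split=> [i | q | j Hj Hjj0]; rewrite /coloring_without_closing.
- exact: two_valued_alternating.
- exact: links_alternating.
rewrite /alternating (negbTE evenK) /closing_ok.
by case: j0 Hj0 Hp Hjj0 => [|[|[|?]]] // _ _; case: j Hj => [|[|[|?]]].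
Qed.

(* Without its triangle, row [r] can be monochromatic, which lets the palette
   change from {0, 1} to {2, 3}; the top row is then the constant 2, which the
   closing edges accept since row 0 avoids color 2. *)
Definition coloring_without_triangle (K r i : nat) : nat -> nat :=
  if i < r then alternating 0 0 1 i
  else if i == r then fun _ => nat_of_bool (odd r)
  else if i < K then alternating 0 2 3 i
  else fun _ => 2.

Lemma coloring_without_triangle_ok K r (g := coloring_without_triangle K r) :
  ~~ odd K -> r < K ->
  [/\ forall i, i < K -> i != r -> two_valued_row (g i),
      forall q, q < K -> links_ok (g q) (g q.+1) &
      forall j, j < 3 -> closing_ok (g 0) (g K) j].
Proof.
move=> evenK HrK; subst g; rewrite /coloring_without_triangle.
split=> [i HiK Hir | q HqK | j Hj].
- rewrite (negbTE Hir) HiK; case: ifP => _; exact: two_valued_alternating.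
- have [_ | Hrq | <-] := ltngtP q.+1 r.
  + exact: links_alternating.
  + rewrite HqK; have [-> | Hqr] := eqVneq q r.
      apply: links_const => j' _; case: ifP => _; last by case: (odd r).
      by rewrite /alternating /pattern; case: ifP; case: ifP; case: (odd r).
    case: ifP => HK; first exact: links_alternating.
    have oddq : odd q by lia.
    by rewrite /alternating oddq; apply: links_pattern_const.
  + by rewrite /alternating /=; case: (odd q); apply: links_pattern_const.
- have [-> ->] : (K < r) = false /\ (K == r) = false by lia.
  rewrite ltnn /closing_ok two_valued_cc.
  by case: r {HrK} => [|r] //=; rewrite /alternating /pattern /=; case: ifP.
Qed.

Definition coloring_without_link2 (q0 j0 i : nat) : nat -> nat :=
  if i <= q0 then alternating ((j0 + 1) %% 3) 0 1 i else alternating j0 0 1 i.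

Lemma coloring_without_link2_ok K q0 j0 (g := coloring_without_link2 q0 j0) :
  ~~ odd K -> q0 < K -> j0 < 3 ->
  [/\ forall i, two_valued_row (g i),
      forall q j t, j < 3 -> (t == 1) || (t == 2) -> (q, j, t) != (q0, j0, 2) ->
        link_ok (g q) (g q.+1) j t &
      forall j, j < 3 -> closing_ok (g 0) (g K) j].
Proof.
move=> evenK Hq0 Hj0; subst g; rewrite /coloring_without_link2.
have Hp : (j0 + 1) %% 3 < 3 by rewrite ltn_mod.
split=> [i | q j t Hj Ht Hne | j Hj].
- by case: ifP => _; apply: two_valued_alternating.
- have [_ | _ | Eq] := ltngtP q q0; try by apply: links_alternating.
  move: Hne; rewrite Eq /alternating /= !xpair_eqE eqxx /=.
  by case: (odd q0); case: j0 Hj0 {Hp} => [|[|[|?]]] // _;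
    case: j Hj => [|[|[|?]]] // _; case/orP: Ht => /eqP ->.
- rewrite leq0n leqNgt Hq0 /alternating (negbTE evenK) /=.
  by case: j0 Hj0 {Hp} => [|[|[|?]]] // _; case: j Hj => [|[|[|?]]].
Qed.

(* Without this link edge, the new color 2 can enter row [q0 + 1] at [j0]. *)
Definition coloring_without_link1 (K q0 j0 i : nat) : nat -> nat :=
  if i <= q0 then alternating ((j0 + 1) %% 3) 0 1 i
  else if odd q0 then alternating j0 0 2 i
  else if i < K then alternating j0 2 1 i
  else fun _ => 2.

Lemma coloring_without_link1_ok K q0 j0 (g := coloring_without_link1 K q0 j0) :
  ~~ odd K -> q0 < K -> j0 < 3 ->
  [/\ forall i, i < K -> two_valued_row (g i),
      forall q j t, q < K -> j < 3 -> (t == 1) || (t == 2) -> (q, j, t) != (q0, j0, 1) ->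
        link_ok (g q) (g q.+1) j t &
      forall j, j < 3 -> closing_ok (g 0) (g K) j].
Proof.
move=> evenK Hq0 Hj0; subst g; rewrite /coloring_without_link1.
have Hp : (j0 + 1) %% 3 < 3 by rewrite ltn_mod.
split=> [i HiK | q j t HqK Hj Ht Hne | j Hj].
- by rewrite HiK; case: ifP => _; [|case: ifP => _]; apply: two_valued_alternating.
- have [_ | Hq | Eq] := ltngtP q q0; first by apply: links_alternating.
    case: ifP => _; first by apply: links_alternating.
    rewrite HqK; case: ifP => HK; first by apply: links_alternating.
    have oddq : odd q by lia.
    by rewrite /alternating oddq; apply: links_pattern_const.
  have Hq0K : ~~ odd q0 -> q0.+1 < K by lia.
  move: Hq0K Hne; rewrite Eq /alternating /= !xpair_eqE eqxx /=.
  by case: (odd q0) => /= [_ | /(_ isT) ->]; case: j0 Hj0 {Hp} => [|[|[|?]]] // _;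
    case: j Hj => [|[|[|?]]] // _; case/orP: Ht => /eqP ->.
- rewrite leq0n leqNgt Hq0 ltnn /alternating (negbTE evenK) /=.
  by case: (odd q0); case: j0 Hj0 {Hp} => [|[|[|?]]] // _; case: j Hj => [|[|[|?]]].
Qed.

Definition proper_on (T : finType) (f : T -> nat) (e : {set T}) : bool :=
  1 < size (undup [seq f x | x <- enum e]) < #|e|.

Lemma eq_proper_on (T : finType) (f f' : T -> nat) (e : {set T}) :
  f =1 f' -> proper_on f e = proper_on f' e.
Proof. by move=> Ef; rewrite /proper_on (eq_map Ef). Qed.

Lemma card_triple (T : finType) (e : {set T}) u v w :
  uniq [:: u; v; w] -> e =i [:: u; v; w] -> #|e| = 3.
Proof. by move=> Huvw He; rewrite (eq_card He) (card_uniqP Huvw). Qed.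

Lemma proper_on_triple (T : finType) (f : T -> nat) (e : {set T}) u v w :
  uniq [:: u; v; w] -> e =i [:: u; v; w] -> proper_on f e = two_valued (f u) (f v) (f w).
Proof.
move=> Huvw He; rewrite /proper_on (card_triple Huvw He) /two_valued.
have -> : size (undup [seq f x | x <- enum e]) = size (undup [:: f u; f v; f w]).
  apply/perm_size/uniq_perm; rewrite ?undup_uniq // => y; rewrite !mem_undup.
  have Hl : enum e =i [:: u; v; w] by move=> x; rewrite mem_enum He.
  by rewrite (eq_mem_map f Hl).
by case: (size _) => [|[|[|[|?]]]].
Qed.

Definition grid_coloring n (g : nat -> nat -> nat) (v : vtx n) : nat := g v.1 v.2.

Lemma val_jadd (j : 'I_3) t : jadd j t = (j + t) %% 3 :> nat.
Proof. by rewrite /jadd inordK // ltn_mod. Qed.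

Lemma mem_triangle n (i a : 'I_n) (b : 'I_3) : ((a, b) \in triangle i) = (a == i).
Proof. by apply/imsetP/eqP => [[j _ [-> _]] // | ->]; exists b. Qed.

Lemma triangle_triple n (i : 'I_n) (l := [:: (i, inord 0); (i, inord 1); (i, inord 2)]) :
  uniq l /\ triangle i =i l.
Proof.
subst l; split; first by rewrite /= !inE !xpair_eqE eqxx /= -!val_eqE /= !inordK.
move=> [a b]; rewrite mem_triangle !inE !xpair_eqE; case: (a == i) => //=.
by case: b => [[|[|[|?]]] Hb] //; rewrite -!val_eqE /= !inordK.
Qed.

Lemma link_edge_triple n (q' q : 'I_n) j t (l := [:: (q', j); (q, j); (q, jadd j t)]) :
  q' = q.+1 :> nat -> (t == 1) || (t == 2) -> uniq l /\ link_edge q' q j t =i l.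
Proof.
subst l => Hq Ht; split => [|x]; last by rewrite !inE -!orbA.
rewrite /= !inE !xpair_eqE -!val_eqE /= val_jadd Hq; case: j => j Hj /=; lia.
Qed.

Lemma link_edge_params_neq n (q' q q0' q0 : 'I_n) (j j0 : 'I_3) t t0 :
  q' = q.+1 :> nat -> q0' = q0.+1 :> nat ->
  link_edge q' q j t != link_edge q0' q0 j0 t0 -> (val q, val j, t) != (val q0, val j0, t0).
Proof.
move=> Hq Hq0; apply: contraNneq => -[/val_inj Eq /val_inj Ej ->].
by rewrite Eq Ej (_ : q' = q0') //; apply: ord_inj; rewrite Hq Hq0 Eq.
Qed.

Definition closing_edge k (j : 'I_3) : {set vtx (2 * k).+1} :=
  [set (ord0, j); (ord_max, j); (ord_max, jadd j 1)].

Lemma closing_edge_triple k j (l := [:: (ord0, j); (ord_max, j); (ord_max, jadd j 1)]) :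
  0 < k -> uniq l /\ closing_edge k j =i l.
Proof.
subst l => k0; split => [|x]; last by rewrite !inE -!orbA.
rewrite /= !inE !xpair_eqE -!val_eqE /= val_jadd; case: j => j Hj /=; lia.
Qed.

Lemma proper_grid_triangle n g (i : 'I_n) :
  proper_on (grid_coloring g) (triangle i) = two_valued_row (g i).
Proof.
have [Hu He] := triangle_triple i.
by rewrite (proper_on_triple _ Hu He) /grid_coloring /= !inordK.
Qed.

Lemma proper_grid_link n g (q' q : 'I_n) j t :
  q' = q.+1 :> nat -> (t == 1) || (t == 2) ->
  proper_on (grid_coloring g) (link_edge q' q j t) = link_ok (g q) (g q') j t.
Proof.
move=> Hq Ht; have [Hu He] := link_edge_triple j Hq Ht.
by rewrite (proper_on_triple _ Hu He) /grid_coloring /= val_jadd.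
Qed.

Lemma proper_grid_closing k g j : 0 < k ->
  proper_on (grid_coloring g) (closing_edge k j) = closing_ok (g 0) (g (2 * k)) j.
Proof.
move=> k0; have [Hu He] := closing_edge_triple j k0.
by rewrite (proper_on_triple _ Hu He) /grid_coloring /= val_jadd.
Qed.

Section ModifiedEdges.

Variable k : nat.
Hypothesis k_gt0 : 0 < k.

Local Notation K := (2 * k).
Local Notation E := (modified_edges k).

Lemma modified_edgesP e : e \in E ->
  [\/ exists2 i : 'I_K.+1, i < K & e = triangle i,
      exists q' q : 'I_K.+1, exists j t,
        [/\ q' = q.+1 :> nat, (t == 1) || (t == 2) & e = link_edge q' q j t] |
      exists j, e = closing_edge k j].
Proof.
rewrite !inE => /orP [/andP [Hne] | /imsetP [j _ ->]]; last by apply: Or33; exists j.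
case/orP => [/existsP [i /eqP Ei] | /existsP [q' /existsP [q /existsP [j /existsP [t]]]]].
  apply: Or31; exists i => //; apply: contraNT Hne; rewrite -leqNgt Ei => Hi.
  by rewrite (_ : i = ord_max) //; apply/val_inj/eqP; rewrite eqn_leq leq_ord.
by case/and3P => /eqP Hq Ht /eqP ->; apply: Or32; exists q', q, j, (t : nat).
Qed.

Lemma triangle_in (i : 'I_K.+1) : i < K -> triangle i \in E.
Proof.
move=> Hi; rewrite !inE; apply/orP; left; apply/andP; split.
  apply: contraTneq Hi => Ei; have := mem_triangle i i ord0.
  by rewrite Ei mem_triangle eqxx => /eqP ->; rewrite ltnn.
by apply/orP; left; apply/existsP; exists i.
Qed.

Lemma link_edge_in (q' q : 'I_K.+1) (j t : 'I_3) :
  q' = q.+1 :> nat -> (t == 1 :> nat) || (t == 2 :> nat) -> link_edge q' q j t \in E.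
Proof.
move=> Hq Ht; rewrite !inE; apply/orP; left; apply/andP; split.
  apply/eqP => Ee; have : (q, j) \in link_edge q' q j t by rewrite !inE eqxx orbT.
  rewrite Ee mem_triangle => /eqP Eq; move: (ltn_ord q'); rewrite Hq Eq /=; lia.
apply/orP; right; apply/existsP; exists q'; apply/existsP; exists q.
by apply/existsP; exists j; apply/existsP; exists t; rewrite /= Hq !eqxx andbT.
Qed.

Lemma closing_edge_in j : closing_edge k j \in E.
Proof. by rewrite inE; apply/orP; right; apply/imsetP; exists j. Qed.

Lemma card_modified_edge e : e \in E -> #|e| = 3.
Proof.
case/modified_edgesP => [[i _ ->] | [q' [q [j [t [Hq Ht ->]]]]] | [j ->]].
- by have [Hu He] := triangle_triple i; apply: card_triple Hu He.
- by have [Hu He] := link_edge_triple j Hq Ht; apply: card_triple Hu He.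
- by have [Hu He] := closing_edge_triple j k_gt0; apply: card_triple Hu He.
Qed.

Lemma modified_edges_cover (v : vtx K.+1) : exists2 e, e \in E & v \in e.
Proof.
case: v => a b; have [Ha | Ha] := ltnP a K.
  by exists (triangle a); [apply: triangle_in | rewrite mem_triangle].
exists (closing_edge k b); first exact: closing_edge_in.
have -> : a = ord_max by apply/val_inj/eqP; rewrite eqn_leq Ha -ltnS ltn_ord.
by rewrite !inE eqxx orbT.
Qed.

Lemma modified_edges_uncolorable : ~ colorable E.
Proof.
move=> [f Hf]; pose g i j := f (inord i, inord j).
have Hg e : e \in E -> proper_on (grid_coloring g) e.
  move=> He; rewrite -(@eq_proper_on _ f); first exact: Hf.
  by case=> a b; rewrite /grid_coloring /g !inord_val.
apply: (@grid_uncolorable K g) => [||i Hi|q Hq j t Hj Ht|j Hj]; try lia.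
- have Hi' : (inord i : 'I_K.+1) < K by rewrite inordK // ltnW.
  by have := Hg _ (triangle_in Hi'); rewrite proper_grid_triangle inordK // ltnW.
- have Hq' : (inord q.+1 : 'I_K.+1) = (inord q : 'I_K.+1).+1 :> nat by rewrite !inordK //; lia.
  have Ht' : ((inord t : 'I_3) == 1 :> nat) || ((inord t : 'I_3) == 2 :> nat) by rewrite inordK //; lia.
  have := Hg _ (link_edge_in (inord j) Hq' Ht').
  by rewrite proper_grid_link // !inordK //; lia.
- have := Hg _ (closing_edge_in (inord j)).
  by rewrite proper_grid_closing // inordK.
Qed.

Lemma colorable_modified_edgesD1 (g : nat -> nat -> nat) e0 :
  (forall i : 'I_K.+1, i < K -> triangle i != e0 -> two_valued_row (g i)) ->
  (forall (q' q : 'I_K.+1) j t, q' = q.+1 :> nat -> (t == 1) || (t == 2) ->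
     link_edge q' q j t != e0 -> link_ok (g q) (g q') j t) ->
  (forall j, closing_edge k j != e0 -> closing_ok (g 0) (g K) j) ->
  colorable (E :\ e0).
Proof.
move=> Htri Hlink Hclose; exists (grid_coloring g) => e.
rewrite in_setD1 -/(proper_on (grid_coloring g) e) => /andP [Hne He].
case/modified_edgesP: He Hne => [[i Hi ->] | [q' [q [j [t [Hq Ht ->]]]]] | [j ->]] Hne.
- by rewrite proper_grid_triangle; apply: Htri.
- by rewrite proper_grid_link //; apply: Hlink.
- by rewrite proper_grid_closing //; apply: Hclose.
Qed.

Lemma modified_edgesD1_colorable e0 : e0 \in E -> colorable (E :\ e0).
Proof.
have evenK : ~~ odd K by lia.
case/modified_edgesP => [[r Hr ->] | [q0' [q0 [j0 [t0 [Hq0 Ht0 ->]]]]] | [j0 ->]].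
- have [Htri Hlink Hclose] := coloring_without_triangle_ok evenK Hr.
  apply: colorable_modified_edgesD1 => [i Hi Hne | q' q j t Hq Ht _ | j _].
  + by apply: Htri => //; apply: contraNneq Hne => /val_inj ->.
  + by rewrite Hq; apply: Hlink; rewrite ?ltn_ord //; move: (ltn_ord q'); lia.
  + exact: Hclose.
- have Hq0K : q0 < K by move: (ltn_ord q0'); lia.
  have neq_params (q' q : 'I_K.+1) (j : 'I_3) t : q' = q.+1 :> nat ->
      link_edge q' q j t != link_edge q0' q0 j0 t0 -> (val q, val j, t) != (val q0, val j0, t0).
    by move=> Hq; apply: link_edge_params_neq.
  case/orP: Ht0 neq_params => /eqP -> neq_params.
  + have [Htri Hlink Hclose] := coloring_without_link1_ok evenK Hq0K (ltn_ord j0).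
    apply: colorable_modified_edgesD1 => [i Hi _ | q' q j t Hq Ht Hne | j _].
    * exact: Htri.
    * by rewrite Hq; apply: Hlink => //; [move: (ltn_ord q'); lia | exact: neq_params Hq Hne].
    * exact: Hclose.
  + have [Htri Hlink Hclose] := coloring_without_link2_ok evenK Hq0K (ltn_ord j0).
    apply: colorable_modified_edgesD1 => [i _ _ | q' q j t Hq Ht Hne | j _].
    * exact: Htri.
    * by rewrite Hq; apply: Hlink => //; exact: neq_params Hq Hne.
    * exact: Hclose.
- have [Htri Hlink Hclose] := coloring_without_closing_ok evenK (ltn_ord j0).
  apply: colorable_modified_edgesD1 => [i _ _ | q' q j t Hq Ht _ | j Hne].
  + exact: Htri.
  + by rewrite Hq; apply: Hlink.
  + by apply: Hclose => //; apply: contraNneq Hne => /val_inj ->.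
Qed.

End ModifiedEdges.

Lemma colorable_subset (T : finType) (E E' : {set {set T}}) :
  E' \subset E -> colorable E -> colorable E'.
Proof. by move=> /subsetP sE'E [f Hf]; exists f => e /sE'E /Hf. Qed.

Theorem mainTheorem16 (k : nat) (hk : 1 <= k) :
  minimal_uncolorable [set: vtx (2 * k).+1] (modified_edges k).
Proof.
split; [split | split].
- by move=> e _; apply: subsetT.
- move=> e e' He He' Hee'; apply/eqP.
  by rewrite eqEcard Hee' !(card_modified_edge hk).
- exact: modified_edges_uncolorable hk.
move=> V' E' [[HV' _] [_ HE']] Hne.
have /properP [_ [e0 He0 He0']] : E' \proper modified_edges k.
  rewrite properEneq HE' andbT; apply/eqP => EE; apply: Hne; congr pair => //.
  apply/setP => v; rewrite inE; have [e He Hv] := modified_edges_cover v.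
  by apply: subsetP Hv; apply: HV'; rewrite EE.
apply: colorable_subset (modified_edgesD1_colorable hk He0).
apply/subsetP => e He; rewrite in_setD1 (subsetP HE') // andbT.
by apply: contraNneq He0' => <-.
Qed.
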